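(* Let $m$ be a positive integer, $x$ a positive integer and $r\in\{0,\dots,m-1\}$, and write $x_k=x_k(x,r)$, $r_k=r_k(x,r)$. For any integers $n,j$ with $n\ge1$ and $0\le j\le n$, $$(m+1)^{j}\big((m+1)x_{n-j}+r_{n-j}\big)\equiv \sum_{k=n-j+1}^{n}(m+1)^{n-k}m^{k-1+j-n}r_k \pmod{m^{j}}.$$ In particular, $(m+1)^n\big((m+1)x+r\big)\equiv\sum_{k=1}^n(m+1)^{n-k}m^{k-1}r_k\pmod{m^n}$ for every positive integer $n$.
   Context: Fix a positive integer $m$. The triangle $T_m$ is an array whose row $x$ ($x=1,2,\dots$) has $x$ entries, in columns $0,\dots,x-1$. Row $1$ is the single entry $1$. For $x>1$, row $x$ is obtained from row $x-1$ by rotating it cyclically left by $m$ positions (the entry in column $c$ of row $x-1$ moves to column $(c-m)\bmod(x-1)\in\{0,\dots,x-2\}$ of row $x$), then appending in column $x-1$ a new entry equal to $1$ plus the entry in column $0$ of row $x-1$. Entries are individual objects keeping their identity as they move. Tracking: for a positive integer $x$ and $r\in\{0,\dots,m-1\}$, follow the individual entry in row $x$, column $r\bmod x$. Let $(x_0,r_0),(x_1,r_1),\dots$ be the list, in strictly increasing lexicographic order, of all integer pairs $(y,c)$ with $y\ge x$, $0\le c\le m-1$, $(y,c)\ge (x,r)$ lexicographically, such that the tracked entry occupies column $c\bmod y$ of row $y$ (so $x_0=x$, $r_0=r$). Write $x_n(x,r)=x_n$, $r_n(x,r)=r_n$. *)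

From mathcomp Require Import all_boot.
Set Implicit Arguments. Unset Strict Implicit. Unset Printing Implicit Defensive.

(* Column (0-based) occupied in row [x + k] of the triangle T_m by the entry
   that sits in row [x], column [r mod x].  Going from row [y] (which has [y]
   entries) to row [y+1], the entry in column [c] moves to column
   [(c - m) mod y]; for [0 <= c < y] this is [(c + y - (m mod y)) mod y]. *)
Fixpoint tpos (m x r k : nat) : nat :=
  match k with
  | 0 => r %% x
  | k'.+1 => let y := x + k' in (tpos m x r k' + y - m %% y) %% y
  end.

Definition lexlt (p q : nat * nat) : bool :=
  (p.1 < q.1) || ((p.1 == q.1) && (p.2 < q.2)).

Definition tracked (m x r : nat) (p : nat * nat) : Prop :=
  [/\ x <= p.1, p.2 < m, ~~ lexlt p (x, r) & tpos m x r (p.1 - x) = p.2 %% p.1].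

(* [e] is the list (x_0,r_0),(x_1,r_1),... in strictly increasing
   lexicographic order of all elements of [tracked m x r]. *)
Definition is_lex_enum (m x r : nat) (e : nat -> nat * nat) : Prop :=
  [/\ forall n, tracked m x r (e n),
      forall n, lexlt (e n) (e n.+1)
    & forall p, tracked m x r p -> exists n, e n = p].

From mathcomp Require Import all_boot zify.

(* Encode a position (row y, column c) by its weight m y + c.  When the tracked
   entry passes from row y to row y + 1 its weight becomes the least number
   >= m (y + 1) congruent to the old weight modulo y; in particular it never
   decreases, and it stays constant while the column is >= m.  From this, the
   lexicographic successor of a tracked pair (y, c) has weight exactly
   m y + y + c, i.e. (m + 1) x_n + r_n = m x_(n+1) + r_(n+1).  Unrolling this
   recurrence j times and reducing modulo m ^ j gives the congruence. *)

Lemma unroll_recurrence_mod {m} {X R : nat -> nat} :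
    (forall n, m.+1 * X n + R n = m * X n.+1 + R n.+1) ->
  forall j i, m.+1 ^ j * (m.+1 * X i + R i)
    = \sum_(i.+1 <= k < (i + j).+1) m.+1 ^ (i + j - k) * m ^ (k - i.+1) * R k
      %[mod m ^ j].
Proof.
move=> step; elim=> [|j IH] i; first by rewrite !expn0 !modn1.
rewrite big_ltn ?addnS ?subSS ?addKn ?subnn ?muln1 //; last by lia.
have -> : \sum_(i.+2 <= k < (i + j).+2) m.+1 ^ ((i + j).+1 - k) * m ^ (k - i.+1) * R k
          = m * \sum_(i.+2 <= k < (i.+1 + j).+1) m.+1 ^ (i.+1 + j - k) * m ^ (k - i.+2) * R k.
  rewrite big_distrr addSn; apply: eq_big_nat => k /andP[ik _].
  by rewrite /= -(subnSK ik) expnS mulnCA -mulnA.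
have -> : m.+1 ^ j.+1 * (m.+1 * X i + R i)
          = m.+1 ^ j * R i.+1 + m * (m.+1 ^ j * (m.+1 * X i.+1 + R i.+1)).
  rewrite [m.+1 * X i + R i]step expnS.
  set a := m.+1 ^ j; set u := X i.+1; set v := R i.+1; lia.
by rewrite -modnDmr expnS -muln_modr IH muln_modr modnDmr.
Qed.

Lemma lexlt_irr p : ~~ lexlt p p.
Proof. rewrite /lexlt; lia. Qed.

Lemma lexlt_asym p q : lexlt p q -> ~~ lexlt q p.
Proof. rewrite /lexlt; lia. Qed.

Lemma lexlt_trans p q s : lexlt p q -> lexlt q s -> lexlt p s.
Proof. rewrite /lexlt; lia. Qed.

Lemma lexlt_weight m p q : p.2 < m -> lexlt p q -> m * p.1 + p.2 < m * q.1 + q.2.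
Proof.
move=> p2m /orP[lt1 | /andP[/eqP-> //]]; last by rewrite ltn_add2l.
have : m * p.1.+1 <= m * q.1 by rewrite leq_mul2l lt1 orbT.
rewrite mulnS; lia.
Qed.

Section Tracking.

Variables m x r : nat.
Hypotheses (m_gt0 : 0 < m) (x_gt0 : 0 < x).

Local Notation pos := (tpos m x r).

Definition tweight k := m * (x + k) + pos k.

Lemma tpos_lt_row k : pos k < x + k.
Proof.
elim: k => [|k IH] /=; first by rewrite addn0 ltn_mod.
by rewrite addnS ltnS ltnW ?ltn_pmod //; lia.
Qed.

Lemma tweight_succ k : exists t,
  tweight k.+1 = tweight k + t * (x + k) /\ m <= pos k + t * (x + k) < m + (x + k).
Proof.
have Y_gt0 : 0 < x + k by lia.
have /esym m_eq := divn_eq m (x + k); have b_lt := ltn_pmod m Y_gt0.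
have P_lt := tpos_lt_row k.
rewrite /tweight /= addnS.
move: m_eq b_lt P_lt; set Y := x + k; set a := m %/ Y; set b := m %% Y; set P := pos k.
move=> m_eq b_lt P_lt.
case: (ltnP P b) => Pb.
- exists a.+1; rewrite modn_small; lia.
- exists a; rewrite (_ : P + Y - b = P - b + Y) ?modnDr ?modn_small; lia.
Qed.

Lemma tweight_next {k c} : c < m -> c %% (x + k) = pos k ->
  m * (x + k) + (x + k) + c <= tweight k.+1 /\
  (m <= c + (x + k) -> tweight k.+1 = m * (x + k) + (x + k) + c).
Proof.
move=> c_lt c_mod; have Y_gt0 : 0 < x + k by lia.
have [t [-> t_bnd]] := tweight_succ k.
have c_eq := divn_eq c (x + k); rewrite c_mod in c_eq.
rewrite /tweight; move: c_eq t_bnd; set Y := x + k; set s := c %/ Y; set P := pos k.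
move=> c_eq t_bnd.
have : s * Y < t * Y by lia.
rewrite ltn_pmul2r // => st; split.
  have : s.+1 * Y <= t * Y by rewrite leq_mul2r st orbT.
  rewrite mulSn; lia.
move=> mc; have : t * Y < s.+2 * Y by rewrite !mulSn; lia.
rewrite ltn_pmul2r // ltnS => ts.
have -> : t = s.+1 by apply/eqP; rewrite eqn_leq ts.
rewrite mulSn; lia.
Qed.

Lemma tweight_stall {k} : m <= pos k -> tweight k.+1 = tweight k /\ pos k.+1 = pos k - m.
Proof.
move=> mP; have [t [w_eq t_bnd]] := tweight_succ k; have P_lt := tpos_lt_row k.
have t0 : t = 0 by case: t {w_eq} t_bnd => // t; rewrite mulSn; lia.
rewrite t0 addn0 in w_eq; split => //.
by move: w_eq; rewrite /tweight addnS mulnS; lia.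
Qed.

(* While the column is >= m, each row step lowers it by m at constant weight. *)
Lemma tweight_settle k : exists2 k', k <= k' & pos k' < m /\ tweight k' = tweight k.
Proof.
have [n] := ubnP (pos k); elim: n k => // n IH k Pn.
case: (ltnP (pos k) m) => Pm; first by exists k.
have [w_eq P_eq] := tweight_stall Pm.
have [|k' kk' [Pk' wk']] := IH k.+1; first by lia.
by exists k'; [exact: ltnW | rewrite wk' w_eq].
Qed.

Lemma tweight_mono : {homo tweight : k l / k <= l}.
Proof.
apply: homo_leq => [//|k l n|k]; first exact: leq_trans.
by have [t [-> _]] := tweight_succ k; apply: leq_addr.
Qed.

Lemma tracked_tweight {y c} : tracked m x r (y, c) -> tweight (y - x) = m * y + c %% y.
Proof. by case=> /= xy _ _ <-; rewrite /tweight subnKC. Qed.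

Lemma tracked_next {y c} : tracked m x r (y, c) ->
  exists q, [/\ tracked m x r q, lexlt (y, c) q & m * q.1 + q.2 = m * y + y + c].
Proof.
move=> tr; have [/= xy cm not_lt cmod] := tr.
case: (ltnP (c + y) m) => cym.
  exists (y, c + y); split => /=; last by lia.
  - split => //=; last by rewrite modnDr.
    by move: not_lt; rewrite /lexlt /=; lia.
  - by rewrite /lexlt /= eqxx; lia.
have ky : x + (y - x) = y by rewrite subnKC.
have c_mod : c %% (x + (y - x)) = pos (y - x) by rewrite ky cmod.
have [_] := tweight_next cm c_mod; rewrite ky => /(_ cym) w_next.
have [k' kk' [Pk' wk']] := tweight_settle (y - x).+1.
exists (x + k', pos k'); split => /=.
- split => //=; first exact: leq_addr.
    by rewrite /lexlt /=; lia.
  by rewrite addKn modn_small // tpos_lt_row.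
- by rewrite /lexlt /=; lia.
- by rewrite -[LHS]/(tweight k') wk' w_next.
Qed.

Lemma tracked_weight_gap {y c y' c'} : tracked m x r (y, c) -> tracked m x r (y', c') ->
  lexlt (y, c) (y', c') -> m * y + y + c <= m * y' + c'.
Proof.
move=> tr tr'; have [/= xy cm _ cmod] := tr; have [/= xy' _ _ cmod'] := tr'.
case/orP=> /= [yy' | /andP[/eqP yy' cc']].
  have ky : x + (y - x) = y by rewrite subnKC.
  have c_mod : c %% (x + (y - x)) = pos (y - x) by rewrite ky cmod.
  have [w_next _] := tweight_next cm c_mod.
  have w_mono : tweight (y - x).+1 <= tweight (y' - x) by apply: tweight_mono; lia.
  have := leq_mod c' y'; rewrite ky (tracked_tweight tr') in w_next w_mono; lia.
subst y'; have y_gt0 : 0 < y by lia.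
have c_eq := divn_eq c y; have c'_eq := divn_eq c' y.
rewrite -cmod' cmod in c'_eq.
have : c %/ y < c' %/ y by rewrite -(ltn_pmul2r y_gt0); lia.
rewrite -(leq_pmul2r y_gt0) mulSn; lia.
Qed.

Section LexEnum.

Variable e : nat -> nat * nat.
Hypothesis he : is_lex_enum m x r e.

Lemma lex_enum_ltn i j : lexlt (e i) (e j) = (i < j).
Proof.
have [_ e_succ _] := he.
have e_mono : {homo e : i j / i < j >-> lexlt i j}.
  by apply: homo_ltn e_succ => q p s; apply: lexlt_trans.
case: (ltngtP i j) => [/e_mono // | ji | ->]; last exact/negbTE/lexlt_irr.
exact/negbTE/lexlt_asym/e_mono.
Qed.

Lemma lex_enum_step n : m.+1 * (e n).1 + (e n).2 = m * (e n.+1).1 + (e n.+1).2.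
Proof.
have [e_tr _ e_onto] := he.
case En: (e n) (e_tr n) => [y c] tr; case En1: (e n.+1) (e_tr n.+1) => [y' c'] tr' /=.
have [q [trq lt_q w_q]] := tracked_next tr.
have [k ek] := e_onto q trq.
have lower : m * y + y + c <= m * y' + c'.
  by apply: tracked_weight_gap tr tr' _; rewrite -En -En1 lex_enum_ltn.
have upper : m * y' + c' <= m * (e k).1 + (e k).2.
  have : n < k by rewrite -lex_enum_ltn ek En.
  rewrite leq_eqVlt => /predU1P [<- | n1k]; first by rewrite En1.
  have [_ c'm _ _] := tr'; apply: ltnW; apply: (lexlt_weight m (y', c') _ c'm).
  by rewrite -En1 lex_enum_ltn.
rewrite ek in upper; lia.
Qed.

Lemma lex_enum0 : r < m -> e 0 = (x, r).
Proof.
move=> rm; have [e_tr _ e_onto] := he.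
have [|k ek] := e_onto (x, r); first by split; rewrite //= ?subnn ?lexlt_irr.
case: k ek => // k ek; have [_ _ + _] := e_tr 0.
by rewrite -ek lex_enum_ltn.
Qed.

End LexEnum.

End Tracking.

Theorem mainTheorem13 (m x r : nat) (e : nat -> nat * nat) :
  0 < m -> 0 < x -> r < m -> is_lex_enum m x r e ->
  (forall n j, 1 <= n -> j <= n ->
     (m.+1 ^ j * (m.+1 * (e (n - j)).1 + (e (n - j)).2)
      = \sum_(n - j + 1 <= k < n.+1) m.+1 ^ (n - k) * m ^ (k + j - n - 1) * (e k).2
        %[mod m ^ j])%N) /\
  (forall n, 1 <= n ->
     (m.+1 ^ n * (m.+1 * x + r)
      = \sum_(1 <= k < n.+1) m.+1 ^ (n - k) * m ^ (k - 1) * (e k).2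
        %[mod m ^ n])%N).
Proof.
move=> m_gt0 x_gt0 rm he.
have e_congr := unroll_recurrence_mod (@lex_enum_step m x r m_gt0 x_gt0 e he).
split=> [n j _ jn | n _].
  move: (e_congr j (n - j)); rewrite subnK // addn1 => ->; congr (_ %% _).
  by apply: eq_big_nat => k /andP[jk _]; congr (_ * _ ^ _ * _); lia.
by move: (e_congr n 0); rewrite (@lex_enum0 m x r e he rm) add0n.
Qed.
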